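(* Let $\lambda, N, t, m, s, v$ be positive integers. (1) If $t\ge 2$, $t\le m(t-1)$, and there exists an $OCA_{\lambda}(N;t,m,t-1,v)$, then there exists an $OCA_{\lambda}(N;t,m,t,v)$. (2) If $s\ge 2$, $2\le t\le m(s-1)$, and there exists an $OCA_{\lambda}(N;t,m,s,v)$, then there exists an $OCA_{\lambda}(N;t,m,s-1,v)$. (3) If $m\ge 2$, $2\le t\le (m-1)s$, and there exists an $OCA_{\lambda}(N;t,m,s,v)$, then there exists an $OCA_{\lambda}(N;t,m-1,s,v)$.
   Context: For positive integers $m,s$, the RT poset $[m\times s]$ is the set $\{1,\ldots,ms\}$ partitioned into $m$ blocks $B_i=\{is+1,\ldots,(i+1)s\}$ ($i=0,\ldots,m-1$); each block is a chain under the usual order of the integers, and elements of different blocks are incomparable. An ideal is a subset $I$ such that $b\in I$ and $a\preceq b$ imply $a\in I$; an anti-ideal is the complement of an ideal. Given an $N\times n$ array $A$ over an alphabet $V$ of size $v$, a set of $t$ columns is $\lambda$-covered if in the $N\times t$ subarray formed by those columns every $t$-tuple over $V$ appears as a row at least $\lambda$ times. For positive integers with $2\le t\le ms$, an ordered covering array $OCA_{\lambda}(N;t,m,s,v)$ is an $N\times ms$ array over an alphabet of size $v$ whose columns are labeled by the elements of the RT poset $[m\times s]$, such that for every anti-ideal $J$ of size $t$ the set of columns labeled by $J$ is $\lambda$-covered. *)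

From mathcomp Require Import all_boot.
Set Implicit Arguments. Unset Strict Implicit. Unset Printing Implicit Defensive.

(* The RT poset [m x s]: element k : 'I_(m*s) stands for k+1 in {1..ms};
   its block is k %/ s, and within a block the order is the integer order. *)
Definition rt_le (m s : nat) (a b : 'I_(m * s)) : bool :=
  (a %/ s == b %/ s) && (a <= b).

Definition is_ideal (m s : nat) (I : {set 'I_(m * s)}) : bool :=
  [forall a, forall b, (b \in I) && rt_le a b ==> (a \in I)].

Definition is_anti_ideal (m s : nat) (J : {set 'I_(m * s)}) : bool :=
  is_ideal (~: J).

Definition array (N n v : nat) := {ffun 'I_N -> {ffun 'I_n -> 'I_v}}.

Definition lambda_covered (lam N n v : nat) (A : array N n v)
    (C : {set 'I_n}) : Prop :=
  forall f : {ffun 'I_n -> 'I_v},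
    lam <= #|[set r : 'I_N | [forall c in C, A r c == f c]]|.

Definition is_OCA (lam N t m s v : nat) (A : array N (m * s) v) : Prop :=
  forall J : {set 'I_(m * s)},
    is_anti_ideal J -> #|J| = t -> lambda_covered lam A J.

Definition OCA_exists (lam N t m s v : nat) : Prop :=
  exists A : array N (m * s) v, is_OCA lam t A.

From mathcomp Require Import all_boot zify.
Set Implicit Arguments. Unset Strict Implicit. Unset Printing Implicit Defensive.

(* A column map phi from the new poset to the old one turns an OCA A into the
   array with columns A (phi c), provided phi maps every anti-ideal of size t
   injectively onto an anti-ideal.  For (3) keep the first blocks, for (2) the
   top s - 1 elements of each chain: both are order embeddings with up-closed
   images.  For (1), with t = s + 1, an anti-ideal of size t in [m x t] either
   avoids all chain bottoms, where lowering each element by one is an order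
   embedding into [m x s], or it is a whole block.  Sending the bottom of block
   q to the top of block q + 1 (mod m) treats both cases with a single map; the
   image of block q is then block q of [m x s] plus the top of another block,
   which is why m >= 2 is needed. *)

Lemma ltn_block m s q r : q < m -> r < s -> q * s + r < m * s.
Proof. nia. Qed.

Lemma divn_block s q r : r < s -> (q * s + r) %/ s = q.
Proof. by move=> rs; rewrite divnMDl ?divn_small ?addn0 //; case: s rs. Qed.

Lemma modn_block s q r : r < s -> (q * s + r) %% s = r.
Proof. by move=> rs; rewrite modnMDl modn_small. Qed.

Section RTPoset.

Variables m s : nat.
Implicit Types (a b x : 'I_(m * s)) (J : {set 'I_(m * s)}).

Lemma rt_s_gt0 x : 0 < s.
Proof. by case: s x => [|//] [x]; rewrite muln0. Qed.

Lemma rt_block_lt x : x %/ s < m.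
Proof. by rewrite ltn_divLR ?(rt_s_gt0 x). Qed.

Lemma rt_pos_lt x : x %% s < s.
Proof. exact/ltn_pmod/(rt_s_gt0 x). Qed.

Lemma rt_leE a b : rt_le a b = (a %/ s == b %/ s) && (a %% s <= b %% s).
Proof.
rewrite /rt_le; case: eqP => //= eq_ab.
by rewrite {1}(divn_eq a s) {1}(divn_eq b s) eq_ab leq_add2l.
Qed.

Lemma rt_le_anti a b : rt_le a b -> rt_le b a -> a = b.
Proof.
by move=> /andP[_ le_ab] /andP[_ le_ba]; apply/val_inj/eqP; rewrite eqn_leq le_ab.
Qed.

Lemma is_anti_idealP J :
  reflect (forall a b, a \in J -> rt_le a b -> b \in J) (is_anti_ideal J).
Proof.
apply: (iffP forallP) => [idealJC a b aJ ab | upJ a].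
- apply: contraT => bJ; have /forallP/(_ b)/implyP := idealJC a.
  by rewrite !inE bJ ab aJ => /(_ isT).
- apply/forallP => b; apply/implyP; rewrite !inE => /andP[bJ ab].
  by apply: contra bJ => aJ; apply: upJ ab.
Qed.

Definition rt_block q : {set 'I_(m * s)} := [set x : 'I_(m * s) | x %/ s == q].

Lemma card_rt_block q : q < m -> #|rt_block q| = s.
Proof.
move=> qm.
pose pt (r : 'I_s) : 'I_(m * s) := Ordinal (ltn_block qm (ltn_ord r)).
have pt_inj : injective pt by move=> r r' /(congr1 val)/addnI/val_inj.
suff -> : rt_block q = pt @: setT by rewrite card_imset // cardsT card_ord.
apply/setP => x; rewrite inE; apply/eqP/imsetP => [xq | [r _ ->]].
- by exists (Ordinal (rt_pos_lt x)) => //; apply: val_inj; rewrite /= -xq -divn_eq.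
- exact: divn_block.
Qed.

Lemma anti_ideal_full_block J a :
  is_anti_ideal J -> #|J| = s -> a \in J -> a %% s = 0 -> J = rt_block (a %/ s).
Proof.
move=> /is_anti_idealP upJ cardJ aJ a_bot; apply/esym/eqP.
rewrite eqEcard card_rt_block ?rt_block_lt // cardJ leqnn andbT.
apply/subsetP => x; rewrite inE => /eqP xa; apply: upJ aJ _.
by rewrite rt_leE xa eqxx a_bot.
Qed.

End RTPoset.

Arguments rt_block {m s} q.

Definition reindex_cols N n n' v (A : array N n v) (phi : 'I_n' -> 'I_n) :
  array N n' v := [ffun r => [ffun c => A r (phi c)]].

Lemma lambda_covered_reindex lam N n n' v (A : array N n v)
    (phi : 'I_n' -> 'I_n) (C : {set 'I_n'}) :
  0 < v -> {in C &, injective phi} -> lambda_covered lam A (phi @: C) ->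
  lambda_covered lam (reindex_cols A phi) C.
Proof.
move=> v0 phi_inj covA f.
pose g := [ffun x => if [pick c in C | phi c == x] is Some c then f c
                     else Ordinal v0].
apply: leq_trans (covA g) _; apply: subset_leq_card; apply/subsetP => r.
rewrite !inE => /forall_inP rowA; apply/forall_inP => c cC.
rewrite !ffunE (eqP (rowA _ (imset_f phi cC))) ffunE.
case: pickP => [c' /andP[c'C /eqP/phi_inj-> //] | /(_ c)].
by rewrite cC eqxx.
Qed.

Lemma OCA_exists_reindex lam N t m s m' s' v
    (phi : 'I_(m' * s') -> 'I_(m * s)) :
  0 < v ->
  (forall J, is_anti_ideal J -> #|J| = t ->
     {in J &, injective phi} /\ is_anti_ideal (phi @: J)) ->
  OCA_exists lam N t m s v -> OCA_exists lam N t m' s' v.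
Proof.
move=> v0 phiP [A ocaA]; exists (reindex_cols A phi) => J antiJ cardJ.
have [phi_inj antiJ'] := phiP J antiJ cardJ.
by apply: lambda_covered_reindex => //; apply: ocaA; rewrite ?card_in_imset.
Qed.

Lemma anti_ideal_imset_embedding m s m' s'
    (phi : 'I_(m' * s') -> 'I_(m * s)) (D : {pred 'I_(m' * s')}) J :
  {in D &, forall a b, rt_le (phi a) (phi b) = rt_le a b} ->
  {in D, forall a z, rt_le (phi a) z -> exists2 c, c \in D & phi c = z} ->
  is_anti_ideal J -> {subset J <= D} ->
  {in J &, injective phi} /\ is_anti_ideal (phi @: J).
Proof.
move=> phi_le phi_up /is_anti_idealP upJ JD; split.
  move=> a b /JD aD /JD bD eq_ab; apply: rt_le_anti.
  - by rewrite -phi_le // eq_ab /rt_le eqxx leqnn.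
  - by rewrite -phi_le // eq_ab /rt_le eqxx leqnn.
apply/is_anti_idealP => _ z /imsetP[a aJ ->] az.
have [c cD eq_z] := phi_up a (JD a aJ) z az.
have cJ : c \in J by apply: (upJ a) => //; rewrite -phi_le ?eq_z // JD.
by rewrite -eq_z imset_f.
Qed.

Lemma OCA_exists_fewer_blocks lam N t m m' s v :
  0 < v -> m' <= m -> OCA_exists lam N t m s v -> OCA_exists lam N t m' s v.
Proof.
move=> v_gt0 le_m'm; have le_n : m' * s <= m * s by rewrite leq_mul2r le_m'm orbT.
apply: (OCA_exists_reindex (phi := widen_ord le_n)) => // J antiJ _.
apply: (anti_ideal_imset_embedding (D := predT)) => // a _ z.
rewrite rt_leE /= => /andP[/eqP eq_block _].
have z_lt : z < m' * s.
  by rewrite -ltn_divLR ?(rt_s_gt0 z) // -eq_block rt_block_lt.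
by exists (Ordinal z_lt) => //; apply: val_inj.
Qed.

Section ShorterChains.

Variables m s s' : nat.
Hypothesis le_s's : s' <= s.

Lemma rt_top_embed_lt (c : 'I_(m * s')) : c %/ s' * s + (s - s' + c %% s') < m * s.
Proof. by apply: ltn_block (rt_block_lt c) _; have := rt_pos_lt c; lia. Qed.

Definition rt_top_embed c : 'I_(m * s) := Ordinal (rt_top_embed_lt c).

Lemma rt_top_embed_div c : rt_top_embed c %/ s = c %/ s'.
Proof. by rewrite divn_block //; have := rt_pos_lt c; lia. Qed.

Lemma rt_top_embed_mod c : rt_top_embed c %% s = s - s' + c %% s'.
Proof. by rewrite modn_block //; have := rt_pos_lt c; lia. Qed.

Lemma OCA_exists_shorter_chains lam N t v :
  0 < v -> OCA_exists lam N t m s v -> OCA_exists lam N t m s' v.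
Proof.
move=> v_gt0; apply: (OCA_exists_reindex (phi := rt_top_embed)) => // J antiJ _.
apply: (anti_ideal_imset_embedding (D := predT)) => // [a b _ _ | a _ z].
  by rewrite !rt_leE rt_top_embed_div !rt_top_embed_mod rt_top_embed_div leq_add2l.
rewrite rt_leE rt_top_embed_div rt_top_embed_mod => /andP[/eqP eq_block le_az].
have r_lt : z %% s - (s - s') < s' by have := rt_pos_lt z; lia.
have c_lt : z %/ s * s' + (z %% s - (s - s')) < m * s'.
  by rewrite ltn_block // -eq_block rt_block_lt.
exists (Ordinal c_lt) => //; apply: val_inj.
rewrite /= divn_block // modn_block // subnKC -?divn_eq //.
exact: leq_trans (leq_addr _ _) le_az.
Qed.

End ShorterChains.

Section LongerChains.

Variables m s : nat.
Hypotheses (s_gt0 : 0 < s) (m_gt1 : 1 < m).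
Implicit Types (x : 'I_(m * s.+1)) (z : 'I_(m * s)).

Definition wrap_index (x : nat) : nat :=
  if x %% s.+1 is r.+1 then x %/ s.+1 * s + r else (x %/ s.+1).+1 %% m * s + s.-1.

Lemma rt_wrap_lt x : wrap_index x < m * s.
Proof.
rewrite /wrap_index; case: (x %% s.+1) (rt_pos_lt x) => [_ | r r_lt] /=.
- apply: ltn_block; first by apply: ltn_pmod; lia.
  by rewrite prednK.
- exact: ltn_block (rt_block_lt x) (r_lt : r < s).
Qed.

Definition rt_wrap x : 'I_(m * s) := Ordinal (rt_wrap_lt x).

Lemma rt_lift_lt z : z %/ s * s.+1 + (z %% s).+1 < m * s.+1.
Proof. exact: ltn_block (rt_block_lt z) (rt_pos_lt z : (z %% s).+1 < s.+1). Qed.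

Definition rt_lift z : 'I_(m * s.+1) := Ordinal (rt_lift_lt z).

Lemma rt_lift_div z : rt_lift z %/ s.+1 = z %/ s.
Proof. by rewrite divn_block // ltnS rt_pos_lt. Qed.

Lemma rt_lift_mod z : rt_lift z %% s.+1 = (z %% s).+1.
Proof. by rewrite modn_block // ltnS rt_pos_lt. Qed.

Lemma rt_liftK : cancel rt_lift rt_wrap.
Proof.
by move=> z; apply: val_inj; rewrite /= /wrap_index rt_lift_mod rt_lift_div -divn_eq.
Qed.

Lemma rt_wrap_nonbottom x :
  x %% s.+1 != 0 -> (rt_wrap x %/ s = x %/ s.+1) * (rt_wrap x %% s = (x %% s.+1).-1).
Proof.
rewrite /= /wrap_index; case: (x %% s.+1) (rt_pos_lt x) => [// | r r_lt _].
by rewrite divn_block ?modn_block.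
Qed.

Lemma rt_wrap_bottom x :
  x %% s.+1 = 0 -> (rt_wrap x %/ s = (x %/ s.+1).+1 %% m) * (rt_wrap x %% s = s.-1).
Proof.
have s_lt : s.-1 < s by rewrite prednK.
by rewrite /= /wrap_index => ->; rewrite divn_block ?modn_block.
Qed.

Lemma rt_wrap_avoiding_bottoms J :
  is_anti_ideal J -> {in J, forall x, x %% s.+1 != 0} ->
  {in J &, injective rt_wrap} /\ is_anti_ideal (rt_wrap @: J).
Proof.
move=> antiJ no_bot.
pose D := [pred x : 'I_(m * s.+1) | x %% s.+1 != 0].
apply: (anti_ideal_imset_embedding (D := D)) => //.
- move=> a b a_nb b_nb; rewrite !rt_leE !rt_wrap_nonbottom //.
  by congr (_ && _); apply/idP/idP; move: a_nb b_nb; rewrite !inE; lia.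
- move=> a a_nb z; exists (rt_lift z); last exact: rt_liftK.
  by rewrite inE rt_lift_mod.
Qed.

Lemma rt_wrap_block q : q < m ->
  {in rt_block q &, injective rt_wrap} /\ is_anti_ideal (rt_wrap @: rt_block q).
Proof.
move=> qm; have q'_neq : q.+1 %% m != q.
  have [lt_qm | eq_qm] : q.+1 < m \/ q.+1 = m by lia.
  - by rewrite modn_small // gtn_eqF.
  - by rewrite eq_qm modnn; lia.
have blockE x : x \in rt_block q -> x = q * s.+1 + x %% s.+1 :> nat.
  by rewrite inE => /eqP <-; apply: divn_eq.
pose psi y := if y %/ s == q then q * s.+1 + (y %% s).+1 else q * s.+1.
have psiK x : x \in rt_block q -> psi (rt_wrap x) = x.
  move=> xB; rewrite [RHS](blockE x xB) /psi; move: xB; rewrite inE => /eqP xq.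
  have [x_bot | x_nb] := eqVneq (x %% s.+1) 0.
  - by rewrite rt_wrap_bottom // xq (negbTE q'_neq) x_bot addn0.
  - by rewrite !rt_wrap_nonbottom // xq eqxx prednK ?lt0n.
split=> [x y xB yB /(congr1 (fun w : 'I_(m * s) => psi w)) | ].
  by rewrite !psiK // => /val_inj.
apply/is_anti_idealP => _ z /imsetP[x xB ->]; rewrite rt_leE.
move: (xB); rewrite inE => /eqP xq.
have [x_bot | x_nb] := eqVneq (x %% s.+1) 0.
- rewrite !rt_wrap_bottom // => /andP[/eqP eq_block le_z].
  have z_top : z %% s = s.-1.
    by apply/eqP; rewrite eqn_leq le_z andbT -ltnS prednK ?rt_pos_lt.
  suff -> : z = rt_wrap x by apply: imset_f.
  apply: ord_inj; rewrite (divn_eq z s) (divn_eq (rt_wrap x) s) -eq_block.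
  by rewrite z_top !rt_wrap_bottom.
- rewrite rt_wrap_nonbottom // xq => /andP[/eqP eq_block _].
  by rewrite -[z]rt_liftK imset_f // inE rt_lift_div -eq_block.
Qed.

Lemma OCA_exists_longer_chains lam N v :
  0 < v -> OCA_exists lam N s.+1 m s v -> OCA_exists lam N s.+1 m s.+1 v.
Proof.
move=> v_gt0; apply: (OCA_exists_reindex (phi := rt_wrap)) => // J antiJ cardJ.
have [/exists_inP[x xJ /eqP x_bot] | no_bot] := boolP [exists x in J, x %% s.+1 == 0].
  rewrite (anti_ideal_full_block antiJ cardJ xJ x_bot).
  exact/rt_wrap_block/rt_block_lt.
apply: rt_wrap_avoiding_bottoms => // x xJ; apply: contra no_bot => x_bot.
by apply/exists_inP; exists x.
Qed.

End LongerChains.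

Theorem proposition2 (lam N t m s v : nat) :
  0 < lam -> 0 < N -> 0 < t -> 0 < m -> 0 < s -> 0 < v ->
  [/\ (2 <= t -> t <= m * (t - 1) ->
        OCA_exists lam N t m (t - 1) v -> OCA_exists lam N t m t v),
      (2 <= s -> 2 <= t -> t <= m * (s - 1) ->
        OCA_exists lam N t m s v -> OCA_exists lam N t m (s - 1) v)
    & (2 <= m -> 2 <= t -> t <= (m - 1) * s ->
        OCA_exists lam N t m s v -> OCA_exists lam N t (m - 1) s v)].
Proof.
move=> _ _ _ _ _ v_gt0; split.
- case: t => [|[|t]] // _ le_t; rewrite subn1 /=.
  have m_gt1 : 1 < m by nia.
  exact: OCA_exists_longer_chains.
(* The upper bounds on t are needed only in (1), to get m >= 2. *)
- by move=> _ _ _; apply: OCA_exists_shorter_chains => //; apply: leq_subr.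
- by move=> _ _ _; apply: OCA_exists_fewer_blocks => //; apply: leq_subr.
Qed.
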